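(* (i) The infinite fixed point beginning with $a$ of the morphism $a\to aca$, $b\to bc$, $c\to b$ is not $d$-automatic for any $d\ge2$. (ii) The infinite fixed point beginning with $a$ of the morphism $a\to aca$, $c\to cd$, $d\to c$ is not $d$-automatic for any $d\ge 2$.
   Context: For $d\ge 2$, a sequence is $d$-automatic if it is the letter-to-letter image of a fixed point of a morphism all of whose letter-images have length $d$. *)

From mathcomp Require Import all_boot.
Set Implicit Arguments. Unset Strict Implicit. Unset Printing Implicit Defensive.

Definition subst (A : Type) (sigma : A -> seq A) (w : seq A) : seq A :=
  flatten (map sigma w).

(* The infinite fixed point of sigma beginning with a (for sigma a = a :: w
   with sigma growing on a): its n-th letter is the n-th letter of
   sigma^(n+1)(a), which is a prefix of the fixed point and has length > n
   for the morphisms considered here (sigma a = a c a). *)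
Definition fixpoint (A : Type) (sigma : A -> seq A) (a : A) : nat -> A :=
  fun n => nth a (iter n.+1 (subst sigma) [:: a]) n.

(* x is d-automatic: x is the letter-to-letter image tau of a fixed point y
   of a morphism phi on a finite alphabet B all of whose letter-images have
   length d.  For a d-uniform morphism, "y = phi(y)" means exactly that the
   block y(dn) ... y(dn+d-1) equals phi(y n) for every n. *)
Definition automatic (A : Type) (d : nat) (x : nat -> A) : Prop :=
  exists (B : finType) (phi : B -> seq B) (tau : B -> A) (y : nat -> B),
    (forall b, size (phi b) = d) /\
    (forall n i, i < d -> y (d * n + i) = nth (y n) (phi (y n)) i) /\
    (forall n, x n = tau (y n)).

Inductive abc := La | Lb | Lc.
Definition sigma1 (l : abc) : seq abc :=
  match l with La => [:: La; Lc; La] | Lb => [:: Lb; Lc] | Lc => [:: Lb] end.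

Inductive acd := Ma | Mc | Md.
Definition sigma2 (l : acd) : seq acd :=
  match l with Ma => [:: Ma; Mc; Ma] | Mc => [:: Mc; Md] | Md => [:: Mc] end.

From HB Require Import structures.
From mathcomp Require Import all_boot zify boolp.
Set Implicit Arguments. Unset Strict Implicit. Unset Printing Implicit Defensive.

(* Both fixed points have the shape x = lim sigma^n(a) with sigma(a) = a c a,
   so sigma^(n+1)(a) = sigma^n(a) sigma^n(c) sigma^n(a), and the letter a is
   absent from every sigma^n(c), whose length grows like a Fibonacci sequence.
   Hence the maximal a-free factors ("gaps") of x are the words sigma^k(c),
   occurring after position 2^k: gaps are arbitrarily long, yet a gap of
   length L cannot start at a position L m for fixed m once L is large, since
   Fibonacci numbers grow more slowly than 2^k.
   On the other hand, if x is d-automatic, the property "the n-th block of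
   length d^e of x is a-free" depends only on the letter y n of the underlying
   d-uniform fixed point y, and the set of such letters evolves under a fixed
   map on subsets of a finite alphabet, so it is eventually periodic in e.
   Pumping one aligned a-free block along a period then produces gaps of
   length d^E starting at position d^E m for arbitrarily large E. *)

Lemma iter_eventually_periodic (T : finType) (f : T -> T) (t : T) :
  exists e0 p, 0 < p /\ forall k, iter (e0 + k * p) f t = iter e0 f t.
Proof.
pose s (i : 'I_#|T|.+1) := iter i f t.
have [i [j neq_ij eq_s]] : exists i, exists2 j, i != j & s i = s j.
  apply/injectivePn/injectiveP => /leq_card; by rewrite card_ord ltnn.
wlog lt_ij : i j neq_ij eq_s / i < j.
  move=> W; case: (ltngtP i j) => [|ji|/val_inj ij]; first exact: W.
  - by apply: (W j i); rewrite 1?eq_sym.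
  - by rewrite ij eqxx in neq_ij.
exists i, (j - i); split; first by rewrite subn_gt0.
elim=> [|k IHk]; first by rewrite addn0.
by rewrite mulSn addnC -addnA iterD addnC IHk -iterD subnK 1?ltnW.
Qed.

Section AutomaticGaps.
Variables (A : eqType) (x : nat -> A) (a : A) (d : nat).
Hypothesis d_gt1 : 1 < d.

Definition free_block (e n : nat) : Prop :=
  forall i, i < d ^ e -> x (d ^ e * n + i) != a.

Lemma free_blockS e n :
  free_block e.+1 n <-> forall q, q < d -> free_block e (d * n + q).
Proof.
have de_gt0 : 0 < d ^ e by rewrite expn_gt0; lia.
split=> [free_n q lt_qd i lt_i | free_q i lt_i].
  have -> : d ^ e * (d * n + q) + i = d ^ e.+1 * n + (d ^ e * q + i)
    by rewrite expnSr; nia.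
  by apply: free_n; rewrite expnSr; nia.
have -> : d ^ e.+1 * n + i = d ^ e * (d * n + i %/ d ^ e) + i %% d ^ e.
  by rewrite {1}(divn_eq i (d ^ e)) expnS; nia.
by apply: free_q; rewrite ?ltn_mod ?ltn_divLR // -expnS.
Qed.

Lemma aligned_free_block e P :
  (forall i, i < 2 * d ^ e -> x (P + i) != a) -> free_block e (P %/ d ^ e).+1.
Proof.
move=> free_P i lt_i.
have de_gt0 : 0 < d ^ e by rewrite expn_gt0; lia.
have lt_r : P %% d ^ e < d ^ e by rewrite ltn_mod.
have eq_P := divn_eq P (d ^ e).
have -> : d ^ e * (P %/ d ^ e).+1 + i = P + (d ^ e - P %% d ^ e + i) by lia.
by apply: free_P; lia.
Qed.

Section Pumping.
Variables (B : finType) (phi : B -> seq B) (tau : B -> A) (y : nat -> B).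
Hypothesis y_fixed : forall n i, i < d -> y (d * n + i) = nth (y n) (phi (y n)) i.
Hypothesis x_tau : forall n, x n = tau (y n).

(* The level-e block of y at n is phi^e (y n): it only depends on the letter y n. *)
Lemma y_block_det e n n' i :
  y n = y n' -> i < d ^ e -> y (d ^ e * n + i) = y (d ^ e * n' + i).
Proof.
elim: e i => [|e IHe] i eq_y lt_i.
  by move: lt_i; rewrite expn0 ltnS leqn0 => /eqP->; rewrite !mul1n !addn0.
have d_gt0 : 0 < d by lia.
have E k : d ^ e.+1 * k + i = d * (d ^ e * k + i %/ d) + i %% d.
  by rewrite {1}(divn_eq i d) expnSr; nia.
have lt_q : i %/ d < d ^ e by rewrite ltn_divLR // -expnSr.
by rewrite !E !y_fixed ?ltn_mod // (IHe _ eq_y lt_q).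
Qed.

Lemma free_block_det e n n' : y n = y n' -> free_block e n -> free_block e n'.
Proof.
by move=> eq_y free_n i lt_i; rewrite x_tau -(y_block_det eq_y lt_i) -x_tau; apply: free_n.
Qed.

Definition free_letters (e : nat) : {set B} :=
  [set b | `[< forall n, y n = b -> free_block e n >]].

Lemma free_lettersP e n : free_block e n <-> y n \in free_letters e.
Proof.
rewrite inE; split=> [free_n | /asboolP free_yn]; last exact: free_yn.
by apply/asboolP => n' eq_y; apply: free_block_det free_n.
Qed.

Definition next_free_letters (S : {set B}) : {set B} :=
  [set b | `[< forall n, y n = b -> forall q, q < d -> y (d * n + q) \in S >]].

Lemma free_letters_iter e : free_letters e = iter e next_free_letters (free_letters 0).
Proof.
elim: e => [|e IHe] //; rewrite iterS -IHe.
apply/setP => b; rewrite !inE; apply/asboolP/asboolP => free_b n eq_y.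
  by move=> q lt_q; apply/free_lettersP; apply: (free_blockS e n).1 lt_q; apply: free_b.
by apply/free_blockS => q lt_q; apply/free_lettersP; apply: free_b.
Qed.

Lemma free_block_pumping :
  exists e0 p, 0 < p /\ forall n k, free_block e0 n -> free_block (e0 + k * p) n.
Proof.
have [e0 [p [p_gt0 per]]] := iter_eventually_periodic next_free_letters (free_letters 0).
exists e0, p; split=> // n k /free_lettersP free_n; apply/free_lettersP.
by rewrite free_letters_iter per -free_letters_iter.
Qed.

End Pumping.

Hypothesis long_gaps : forall L, exists P, forall i, i < L -> x (P + i) != a.
Hypothesis sparse_gaps : forall m, exists M, forall L, 0 < L ->
  (forall i, i < L -> x (L * m + i) != a) -> L <= M.

Lemma not_automatic_of_sparse_gaps : ~ automatic d x.
Proof.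
move=> [B [phi [tau [y [_ [y_fixed x_tau]]]]]].
have [e0 [p [p_gt0 pump]]] := free_block_pumping y_fixed x_tau.
have [P free_P] := long_gaps (2 * d ^ e0).
have [M bound_M] := sparse_gaps (P %/ d ^ e0).+1.
set E := e0 + M.+1 * p.
have free_E : free_block E (P %/ d ^ e0).+1 := pump _ M.+1 (aligned_free_block free_P).
have le_dE_M : d ^ E <= M by apply: bound_M free_E; rewrite expn_gt0; lia.
have : E < d ^ E := ltn_expl E d_gt1.
have : M < E by rewrite /E; nia.
lia.
Qed.

End AutomaticGaps.

Lemma four_pow_dominates k : (k + 3) * 3 ^ k <= 3 * 4 ^ k.
Proof.
elim: k => [|k IHk] //; rewrite !expnS.
by move: IHk; move: (3 ^ k) (4 ^ k) => u v; nia.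
Qed.

Section FibonacciGrowth.
Variable f : nat -> nat.
Hypothesis f0 : f 0 = 1.
Hypothesis f1 : 1 <= f 1 <= 2.
Hypothesis fSS : forall n, f n.+2 = f n.+1 + f n.

Lemma fib_mono n : f n <= f n.+1.
Proof. by case: n => [|n]; rewrite ?fSS; lia. Qed.

Lemma fib_pos n : 0 < f n.
Proof. by elim: n => [|n IHn]; [rewrite f0 | exact: leq_trans IHn (fib_mono n)]. Qed.

Lemma fib_ge n : n <= f n.
Proof.
elim: n => [|[|n] IHn] //; first by lia.
by rewrite fSS; have := fib_pos n; lia.
Qed.

Lemma fib_double n : f n.+1 <= 2 * f n.
Proof.
case: n => [|n]; first by rewrite f0; lia.
by rewrite fSS; have := fib_mono n; lia.
Qed.

(* Since f (n+2) <= 3 f n, f n is at most 2 sqrt(3)^n. *)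
Lemma fib_sq n : f n ^ 2 <= 4 * 3 ^ n.
Proof.
suff : f n ^ 2 <= 4 * 3 ^ n /\ f n.+1 ^ 2 <= 4 * 3 ^ n.+1 by case.
elim: n => [|n [IHn IHn1]].
  rewrite f0; split=> //; apply: (@leq_trans (2 ^ 2)) => //.
  by rewrite leq_sqr; case/andP: f1.
have le_3 : f n.+2 <= 3 * f n by rewrite fSS; have := fib_double n; lia.
split=> //; rewrite !expnS; move: IHn le_3; rewrite expnS.
by move: (f n) (f n.+2) (3 ^ n) => u v w; nia.
Qed.

Lemma fib_sparse m : exists M, forall k L, 2 ^ k <= L * m -> L <= f k -> L <= M.
Proof.
exists (4 * 3 ^ (12 * m ^ 2)) => k L le_2k le_Lf.
have le_L2 : L ^ 2 <= 4 * 3 ^ k by apply: leq_trans (fib_sq k); rewrite leq_sqr.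
have le_4k : 4 ^ k <= 4 * 3 ^ k * m ^ 2.
  have -> : 4 ^ k = (2 ^ k) ^ 2 by rewrite -expnM mulnC expnM.
  apply: (@leq_trans ((L * m) ^ 2)); first by rewrite leq_sqr.
  by rewrite expnMn leq_mul2r le_L2 orbT.
have le_k : k <= 12 * m ^ 2.
  have := four_pow_dominates k; have : 0 < 3 ^ k by rewrite expn_gt0.
  by move: le_4k; move: (3 ^ k) (4 ^ k) (m ^ 2) => u v w; nia.
have := leq_pexp2l (isT : 0 < 3) le_k.
by move: le_L2; move: (3 ^ k) (3 ^ _) => u v; nia.
Qed.

End FibonacciGrowth.

Lemma subst_cat (A : Type) (sigma : A -> seq A) u v :
  subst sigma (u ++ v) = subst sigma u ++ subst sigma v.
Proof. by rewrite /subst map_cat flatten_cat. Qed.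

Lemma iter_subst_cat (A : Type) (sigma : A -> seq A) n u v :
  iter n (subst sigma) (u ++ v) = iter n (subst sigma) u ++ iter n (subst sigma) v.
Proof. by elim: n => [|n IHn] //=; rewrite IHn subst_cat. Qed.

Section GapStructure.
Variables (A : eqType) (sigma : A -> seq A) (a c : A).
Hypothesis sigma_a : sigma a = [:: a; c; a].
Hypothesis c_neq_a : c != a.
Hypothesis sigma_free : forall l, l != a -> all (predC1 a) (sigma l).

Definition wa n := iter n (subst sigma) [:: a].
Definition wc n := iter n (subst sigma) [:: c].

Lemma wa_succ n : wa n.+1 = wa n ++ wc n ++ wa n.
Proof.
rewrite /wa /wc iterSr /subst /= cats0 sigma_a.
by rewrite (iter_subst_cat _ n [:: a]) (iter_subst_cat _ n [:: c]).
Qed.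

Lemma size_wa n : 2 ^ n <= size (wa n).
Proof. by elim: n => [|n IHn] //; rewrite wa_succ !size_cat expnS; lia. Qed.

Lemma wc_free n : all (predC1 a) (wc n).
Proof.
elim: n => [|n IHn]; first by rewrite /= c_neq_a.
rewrite /wc iterS -/(wc n); elim: (wc n) IHn => [|l w IHw] //= /andP [al aw].
by rewrite /subst /= all_cat sigma_free //; apply: IHw.
Qed.

Lemma nth_wa_succ n k : nth a (wa n.+1) k =
  if k < size (wa n) then nth a (wa n) k
  else if k < size (wa n) + size (wc n) then nth a (wc n) (k - size (wa n))
  else nth a (wa n) (k - size (wa n) - size (wc n)).
Proof. by rewrite wa_succ !nth_cat; case: ltnP => // le_k; rewrite ltn_subLR. Qed.

(* Every wa n starts and ends with a; these occurrences delimit the gaps. *)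
Lemma wa_head n : nth a (wa n) 0 = a.
Proof.
elim: n => [|n IHn] //.
by rewrite nth_wa_succ (leq_trans (expn_gt0 2 n) (size_wa n)).
Qed.

Lemma wa_last n : nth a (wa n) (size (wa n)).-1 = a.
Proof.
elim: n => [|n IHn] //.
have le_s := size_wa n; have pos : 0 < 2 ^ n by rewrite expn_gt0.
rewrite nth_wa_succ wa_succ !size_cat.
case: ltnP => [|_]; first lia. case: ltnP => [|_]; first lia.
by rewrite (_ : _ - _ - _ = (size (wa n)).-1) //; lia.
Qed.

Lemma size_wa_mono : {homo (fun n => size (wa n)) : n n' / n <= n'}.
Proof. by apply: homo_leq leqnn leq_trans _ => n; rewrite wa_succ !size_cat leq_addr. Qed.

Lemma nth_wa_mono n n' k : n <= n' -> k < size (wa n) -> nth a (wa n') k = nth a (wa n) k.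
Proof.
move=> /subnK <-; elim: (n' - n) => [|j IHj] lt_k //.
by rewrite addSn nth_wa_succ IHj // (leq_trans lt_k) // size_wa_mono // leq_addl.
Qed.

Lemma fixpoint_wa n k : k < size (wa n) -> fixpoint sigma a k = nth a (wa n) k.
Proof.
move=> lt_k; have lt_k' : k < size (wa k.+1).
  exact: leq_trans (ltnW (ltn_expl k.+1 (isT : 1 < 2))) (size_wa k.+1).
rewrite /fixpoint -/(wa k.+1) -(nth_wa_mono (leq_maxl n k.+1) lt_k).
by rewrite (nth_wa_mono (leq_maxr n k.+1) lt_k').
Qed.

(* Every a-free factor of wa n lies inside a copy of some wc k occurring at a
   position at least 2^k (namely after a prefix wa k). *)
Lemma gap_in_wa n P L : 0 < L -> P + L <= size (wa n) ->
  (forall i, i < L -> nth a (wa n) (P + i) != a) ->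
  exists k, 2 ^ k <= P /\ L <= size (wc k).
Proof.
elim: n P => [|n IHn] P L_gt0 le_PL free_P.
  have P0 : P = 0 by move: le_PL => /=; lia.
  by move: (free_P 0 L_gt0); rewrite P0 /wa /= eqxx.
have no_a j : P <= j < P + L -> nth a (wa n.+1) j != a.
  by case/andP=> le_Pj lt_j; rewrite -(subnKC le_Pj); apply: free_P; lia.
have le_s := size_wa n; have pos : 0 < 2 ^ n by rewrite expn_gt0.
move: le_PL; rewrite wa_succ !size_cat.
set s := size (wa n) in IHn le_s *; set t := size (wc n) => le_PL.
have [le_PLs | lt_s_PL] := leqP (P + L) s.
  apply: IHn => // i lt_i; move: (free_P i lt_i).
  by rewrite nth_wa_succ -/s ifT //; lia.
have [lt_Ps | le_sP] := ltnP P s.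
  by move: (no_a s.-1); rewrite nth_wa_succ -/s ifT ?wa_last ?eqxx //; lia.
have [le_PLt | lt_t_PL] := leqP (P + L) (s + t).
  by exists n; split; [exact: leq_trans le_s le_sP | lia].
have [lt_Pt | le_tP] := ltnP P (s + t).
  move: (no_a (s + t)); rewrite nth_wa_succ -/s -/t (ltnNge _ s) leq_addr ltnn.
  by rewrite addKn subnn wa_head eqxx; lia.
have [k [le_k le_L]] : exists k, 2 ^ k <= P - s - t /\ L <= size (wc k).
  apply: IHn => [//||i lt_i]; first lia.
  have -> : P - s - t + i = P + i - s - t by lia.
  by move: (free_P i lt_i); rewrite nth_wa_succ -/s -/t !ifF //; lia.
by exists k; split => //; lia.
Qed.

Hypothesis wc_fib : forall n, size (wc n.+2) = size (wc n.+1) + size (wc n).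
Hypothesis wc_one : 1 <= size (wc 1) <= 2.

(* The copy of wc L right after the prefix wa L is an a-free factor of length >= L. *)
Lemma fixpoint_long_gaps L : exists P, forall i, i < L -> fixpoint sigma a (P + i) != a.
Proof.
exists (size (wa L)) => i lt_i.
have le_L : L <= size (wc L) := fib_ge erefl wc_one wc_fib L.
rewrite (@fixpoint_wa L.+1); last by rewrite wa_succ !size_cat; lia.
rewrite nth_wa_succ ltnNge leq_addr /= ltn_add2l (leq_trans lt_i) // addKn.
by apply/(all_nthP a (wc_free L)); lia.
Qed.

(* A gap of length L at position L m lies in some wc k with 2^k <= L m,
   so fib_sparse bounds L. *)
Lemma fixpoint_sparse_gaps m : exists M, forall L, 0 < L ->
  (forall i, i < L -> fixpoint sigma a (L * m + i) != a) -> L <= M.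
Proof.
have [M bound_M] := fib_sparse erefl wc_one wc_fib m.
exists M => L L_gt0 free_Lm.
set n := L * m + L.
have lt_n : L * m + L <= size (wa n).
  exact: leq_trans (ltnW (ltn_expl n (isT : 1 < 2))) (size_wa n).
have [k [le_k le_L]] : exists k, 2 ^ k <= L * m /\ L <= size (wc k).
  apply: (gap_in_wa L_gt0 lt_n) => i lt_i.
  by rewrite -fixpoint_wa ?free_Lm //; lia.
exact: bound_M le_k le_L.
Qed.

Lemma fixpoint_not_automatic d : 1 < d -> ~ automatic d (fixpoint sigma a).
Proof.
move=> d_gt1; exact: not_automatic_of_sparse_gaps fixpoint_long_gaps fixpoint_sparse_gaps.
Qed.

End GapStructure.

Lemma fibonacci_sizes (A : Type) (sigma : A -> seq A) (u v : A) :
  sigma u = [:: u; v] -> sigma v = [:: u] ->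
  let size_it w n := size (iter n (subst sigma) [:: w]) in
  forall n, size_it u n.+2 = size_it u n.+1 + size_it u n /\
            size_it v n.+2 = size_it v n.+1 + size_it v n.
Proof.
move=> sigma_u sigma_v size_it.
have it_v n : iter n.+1 (subst sigma) [:: v] = iter n (subst sigma) [:: u].
  by rewrite iterSr /subst /= sigma_v.
have it_u n : iter n.+1 (subst sigma) [:: u] =
    iter n (subst sigma) [:: u] ++ iter n (subst sigma) [:: v].
  by rewrite iterSr -iter_subst_cat /subst /= sigma_u.
by move=> n; rewrite /size_it it_u size_cat !it_v it_u size_cat.
Qed.

Definition abc_eqb (u v : abc) : bool :=
  match u, v with La, La | Lb, Lb | Lc, Lc => true | _, _ => false end.
Lemma abc_eqP : Equality.axiom abc_eqb. Proof. by case; case; constructor. Qed.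
HB.instance Definition _ := hasDecEq.Build abc abc_eqP.

Definition acd_eqb (u v : acd) : bool :=
  match u, v with Ma, Ma | Mc, Mc | Md, Md => true | _, _ => false end.
Lemma acd_eqP : Equality.axiom acd_eqb. Proof. by case; case; constructor. Qed.
HB.instance Definition _ := hasDecEq.Build acd acd_eqP.

Theorem corollary5p4 :
  (forall d : nat, 2 <= d -> ~ automatic d (fixpoint sigma1 La)) /\
  (forall d : nat, 2 <= d -> ~ automatic d (fixpoint sigma2 Ma)).
Proof.
split=> d d_gt1.
- apply: (@fixpoint_not_automatic _ sigma1 La Lc) => //; first by case.
  by move=> n; case: (fibonacci_sizes (sigma := sigma1) (u := Lb) (v := Lc) erefl erefl n).
- apply: (@fixpoint_not_automatic _ sigma2 Ma Mc) => //; first by case.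
  by move=> n; case: (fibonacci_sizes (sigma := sigma2) (u := Mc) (v := Md) erefl erefl n).
Qed.
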